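(* Let $\mathbf K$ be a commutative field, $p,q\in\mathbb N$, and let $A_1,\dots,A_d\in\mathrm{Rec}_{p\times q}(\mathbf K)$ span a recursively closed subspace $\mathcal A=\sum_{j=1}^d\mathbf K A_j$, with saturation level $N$ (which satisfies $N\le\dim(\mathcal A)-1<d$). Then $A_1,\dots,A_d$ are linearly independent if and only if their restrictions $A_1[\mathcal M_{p\times q}^{\le N}],\dots,A_d[\mathcal M_{p\times q}^{\le N}]\in\mathbf K^{\mathcal M_{p\times q}^{\le N}}$ are linearly independent.
   Context: For $p,q,l\in\mathbb N$, $\mathcal M_{p\times q}^l$ is the set of pairs $(U,W)$ of words of common length $l$ with $U\in\{0,\dots,p-1\}^l$, $W\in\{0,\dots,q-1\}^l$; $\mathcal M_{p\times q}=\bigcup_l\mathcal M_{p\times q}^l$ and $\mathcal M_{p\times q}^{\le l}$ is the set of words of length at most $l$. $\mathbf K^{\mathcal M_{p\times q}}$ is the space of functions $\mathcal M_{p\times q}\to\mathbf K$, values written $A[U,W]$; $A[\mathcal S]$ is the restriction of $A$ to a subset $\mathcal S$. Shift maps: $(\rho(S,T)A)[U,W]=A[US,WT]$; a subspace is recursively closed if invariant under all shift maps; $\mathrm{Rec}_{p\times q}(\mathbf K)$ is the set of $A$ whose span of $\{\rho(S,T)A\}$ is finite-dimensional. For a subspace $\mathcal A$, $\mathcal A[\mathcal M_{p\times q}^{\le l}]$ is its image under restriction to $\mathcal M_{p\times q}^{\le l}$; the saturation level of a non-zero $\mathcal A$ is the smallest $N\ge0$ such that the projection $\mathcal A[\mathcal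 M_{p\times q}^{\le N+1}]\to\mathcal A[\mathcal M_{p\times q}^{\le N}]$ is an isomorphism ($\infty$ if none), and the zero space has saturation level $-1$. *)

From mathcomp Require Import all_boot all_order all_algebra.
Set Implicit Arguments. Unset Strict Implicit. Unset Printing Implicit Defensive.
Import Order.TTheory GRing.Theory Num.Theory.
Local Open Scope ring_scope.

(* A pair (U,W) of words of common length l over {0..p-1} and {0..q-1}
   is encoded as the word [(U_1,W_1); ...; (U_l,W_l)] over 'I_p * 'I_q. *)
Definition word (p q : nat) := seq ('I_p * 'I_q).

Definition series (K : fieldType) (p q : nat) := word p q -> K.

Definition shift (K : fieldType) (p q : nat) (S : word p q) (A : series K p q)
  : series K p q := fun w => A (w ++ S).

Definition in_span (K : fieldType) (p q d : nat) (A : 'I_d -> series K p q)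
  (f : series K p q) : Prop :=
  exists c : 'I_d -> K, forall w, f w = \sum_(j < d) c j * A j w.

Definition is_rec (K : fieldType) (p q : nat) (A : series K p q) : Prop :=
  exists (m : nat) (B : 'I_m -> series K p q), forall S, in_span B (shift S A).

Definition rec_closed (K : fieldType) (p q d : nat) (A : 'I_d -> series K p q)
  : Prop := forall (j : 'I_d) (S : word p q), in_span A (shift S (A j)).

Definition lin_indep_on (K : fieldType) (p q d : nat) (P : word p q -> Prop)
  (A : 'I_d -> series K p q) : Prop :=
  forall c : 'I_d -> K,
    (forall w, P w -> \sum_(j < d) c j * A j w = 0) -> forall j, c j = 0.

Definition lin_indep (K : fieldType) (p q d : nat) (A : 'I_d -> series K p q)
  : Prop := lin_indep_on (fun _ => True) A.

(* The (always surjective, linear) projection A[M^{<= n+1}] -> A[M^{<= n}]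
   is an isomorphism, i.e. has trivial kernel. *)
Definition sat_iso (K : fieldType) (p q d : nat) (A : 'I_d -> series K p q)
  (n : nat) : Prop :=
  forall f, in_span A f ->
    (forall w : word p q, (size w <= n)%N -> f w = 0) ->
    forall w : word p q, (size w <= n.+1)%N -> f w = 0.

Definition is_sat_level (K : fieldType) (p q d : nat) (A : 'I_d -> series K p q)
  (N : int) : Prop :=
  ((forall j w, A j w = 0) /\ N = (-1)%R)
  \/ ((exists j w, A j w != 0) /\
      exists n : nat, N = n%:Z /\ sat_iso A n /\
        forall m : nat, (m < n)%N -> ~ sat_iso A m).

From mathcomp Require Import all_boot all_order all_algebra.
Set Implicit Arguments. Unset Strict Implicit. Unset Printing Implicit Defensive.
Import Order.TTheory GRing.Theory Num.Theory.
Local Open Scope ring_scope.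

(* If an element f of the span vanishes on words of length at most N, so does
   every shift of f, and the saturation property extends the vanishing to
   length N + 1 for all of them; reading a word of length m + 1 as a word of
   length m shifted by one letter, induction on the length shows that f is
   zero.  Hence a combination of A_1, ..., A_d vanishing on M^{<= N} vanishes
   identically, which is the nontrivial implication. *)

Section RecursivelyClosedSpan.

Variables (K : fieldType) (p q d : nat) (A : 'I_d -> series K p q).
Hypothesis A_rec_closed : rec_closed A.

Lemma in_span_shift (S : word p q) (f : series K p q) :
  in_span A f -> in_span A (shift S f).
Proof.
case=> c f_def.
have /fin_all_exists [e A_shift] := A_rec_closed ^~ S.
rewrite /shift in A_shift *.
exists (fun i => \sum_(j < d) c j * e j i) => w.
rewrite f_def.
under eq_bigr => j _ do rewrite A_shift mulr_sumr.
rewrite exchange_big /=; apply: eq_bigr => i _.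
by rewrite mulr_suml; apply: eq_bigr => j _; rewrite mulrA.
Qed.

Lemma sat_iso_vanish (n : nat) (f : series K p q) :
  sat_iso A n -> in_span A f ->
  (forall w : word p q, (size w <= n)%N -> f w = 0) -> forall w, f w = 0.
Proof.
move=> A_sat f_span f0 w.
suff vanish_le m : forall g, in_span A g ->
    (forall u : word p q, (size u <= n)%N -> g u = 0) ->
    forall u : word p q, (size u <= m)%N -> g u = 0.
  exact: (vanish_le (size w) f).
elim: m => [|m IHm] g g_span g0 u.
  by rewrite leqn0 => /nilP ->; apply: g0.
rewrite leq_eqVlt ltnS => /orP[/eqP size_u|]; last exact: IHm.
case/lastP: u size_u => [//|u x]; rewrite size_rcons => -[size_u].
have g0_succ := A_sat g g_span g0.
rewrite -cats1; apply: (IHm (shift [:: x] g)); last by rewrite size_u.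
- exact: in_span_shift.
- by move=> v size_v; apply: g0_succ; rewrite size_cat addn1.
Qed.

End RecursivelyClosedSpan.

Lemma lin_indep_onW (K : fieldType) (p q d : nat) (P Q : word p q -> Prop)
    (A : 'I_d -> series K p q) :
  (forall w, P w -> Q w) -> lin_indep_on P A -> lin_indep_on Q A.
Proof. by move=> PQ A_indep c c0; apply: A_indep => w /PQ; apply: c0. Qed.

Lemma lin_indep_on_determining (K : fieldType) (p q d : nat)
    (P : word p q -> Prop) (A : 'I_d -> series K p q) :
  (forall f, in_span A f -> (forall w, P w -> f w = 0) -> forall w, f w = 0) ->
  lin_indep A -> lin_indep_on P A.
Proof.
move=> P_determining A_indep c c0; apply: A_indep => w _.
by apply: P_determining c0 w; exists c.
Qed.

Theorem mainTheorem5 (K : fieldType) (p q d : nat) (A : 'I_d -> series K p q)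
  (N : int) :
  (forall j, is_rec (A j)) ->
  rec_closed A ->
  is_sat_level A N ->
  (lin_indep A <->
   lin_indep_on (fun w : word p q => (size w)%:Z <= N) A).
Proof.
move=> _ A_rec_closed A_sat; split; last by apply: lin_indep_onW.
apply: lin_indep_on_determining => f [c f_def].
case: A_sat => [[A0 _] | [_ [n [-> [A_sat _]]]]] f0 w.
  by rewrite f_def big1 // => j _; rewrite A0 mulr0.
apply: (sat_iso_vanish A_rec_closed A_sat) _ w; first by exists c.
by move=> u size_u; apply: f0; rewrite lez_nat.
Qed.
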